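(* Let $V$ be the vector module of $gl(m|n)$, $V(\Lambda)$ a finite-dimensional irreducible $gl(m|n)$-module with maximal $\mathbb{Z}$-graded component $V_0(\Lambda)$, and let $\langle\,,\,\rangle$ be the induced non-degenerate invariant sesquilinear form on $V\otimes V(\Lambda)$. If $0\neq v_+\in V\otimes V(\Lambda)$ is a maximal weight vector, then $\langle v_+,V\otimes V_0(\Lambda)\rangle\neq(0)$.
   Context: $L=gl(m|n)$ over $\mathbb{C}$, basis $E_{pq}$ ($1\le p,q\le m+n$), parity $(p)+(q)$ with $(p)=0$ for $p\le m$, $1$ otherwise, graded bracket $[E_{pq},E_{rs}]=\delta_{qr}E_{ps}-(-1)^{((p)+(q))((r)+(s))}\delta_{ps}E_{rq}$; $\mathbb{Z}$-grading $L=L_-\oplus L_0\oplus L_+$ with $L_0=gl(m)\oplus gl(n)$, $L_+=\mathrm{span}\{E_{pq}:p\le m<q\}$, $L_-=\mathrm{span}\{E_{qp}:p\le m<q\}$. The vector module $V$ has basis $|s\rangle$, $E_{pq}|s\rangle=\delta_{qs}|p\rangle$. $V_0(\Lambda)$ is the irreducible $L_0$-submodule of $V(\Lambda)$ generated by the highest weight vector. $V(\Lambda)$ (and likewise $V$) carries a unique non-degenerate sesquilinear form with $\langle av,w\rangle=\langle v,a^\dagger w\rangle$ for $a\in L$, where $(E_{pq})^\dagger=E_{qp}$; the form on $V$ is an inner product. The induced form on $V\otimes V(\Lambda)$ is $\langle v\otimes w,v'\otimes w'\rangle=\langle v,v'\rangle\langle w,w'\rangle$, which is non-degenerate and invariant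 in the same sense. A maximal weight vector is a weight vector annihilated by all $E_{pq}$ with $p<q$. *)

From HB Require Import structures.
From mathcomp Require Import all_boot all_order all_algebra.
Import Order.TTheory GRing.Theory Num.Theory.
Local Open Scope ring_scope.

(* Indices p : 'I_(m+n) are 0-based: p is even iff p < m (paper: p <= m, 1-based). *)
Definition ipar (m n : nat) (p : 'I_(m + n)) : bool := (m <= p)%N.

Definition epar (m n : nat) (p q : 'I_(m + n)) : bool := ipar m n p (+) ipar m n q.

Definition esign (C : nzRingType) (a b : bool) : C := (-1) ^+ (a && b).

(* A matrix A (acting on column coordinates) acts on a vector v, stored as a
   row vector: A . v  :=  v *m A^T. *)
Definition act (C : nzRingType) (d : nat) (A : 'M[C]_d) (v : 'rV[C]_d) : 'rV[C]_d :=
  v *m A^T.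

(* rho : a Z2-graded representation of gl(m|n) on C^d, with basis parities wpar,
   rho p q = the matrix of E_pq. *)
Definition is_glmn_rep (C : nzRingType) (m n d : nat) (wpar : 'I_d -> bool)
  (rho : 'I_(m + n) -> 'I_(m + n) -> 'M[C]_d) : Prop :=
  (forall p q i j, rho p q i j != 0 -> (wpar i (+) wpar j) = epar m n p q) /\
  (forall p q r s,
     rho p q *m rho r s - esign C (epar m n p q) (epar m n r s) *: (rho r s *m rho p q) =
     (q == r)%:R *: rho p s
       - (esign C (epar m n p q) (epar m n r s) * (p == s)%:R) *: rho r q).

Definition parity_mx (C : nzRingType) (d : nat) (wpar : 'I_d -> bool) : 'M[C]_d :=
  diag_mx (\row_i esign C true (wpar i)).

Definition irreducible_rep (C : fieldType) (m n d : nat) (wpar : 'I_d -> bool)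
  (rho : 'I_(m + n) -> 'I_(m + n) -> 'M[C]_d) : Prop :=
  (0 < d)%N /\
  forall U : 'M[C]_d,
    (forall p q, stablemx U (rho p q)^T) -> stablemx U (parity_mx C d wpar) ->
    (U == (0 : 'M[C]_d))%MS \/ (U == 1%:M)%MS.

Definition highest_weight_vec (C : fieldType) (m n d : nat)
  (rho : 'I_(m + n) -> 'I_(m + n) -> 'M[C]_d) (w : 'rV[C]_d) : Prop :=
  w != 0 /\
  (exists lam : 'I_(m + n) -> C, forall p, act C d (rho p p) w = lam p *: w) /\
  (forall p q : 'I_(m + n), (p < q)%N -> act C d (rho p q) w = 0).

(* the row space of U is the L_0-submodule generated by w, L_0 = span of even E_pq *)
Definition L0_generated (C : fieldType) (m n d : nat)
  (rho : 'I_(m + n) -> 'I_(m + n) -> 'M[C]_d) (w : 'rV[C]_d) (U : 'M[C]_d) : Prop :=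
  (w <= U)%MS /\
  (forall p q, ~~ epar m n p q -> stablemx U (rho p q)^T) /\
  (forall U' : 'M[C]_d, (w <= U')%MS ->
     (forall p q, ~~ epar m n p q -> stablemx U' (rho p q)^T) -> (U <= U')%MS).

(* Elements of V (x) W are matrices X : 'M_(m+n, d), X = sum_s |s> (x) (row s X).
   Action: E_pq (|s> (x) w) = d_qs |p> (x) w + (-1)^{((p)+(q))(s)} |s> (x) E_pq w. *)
Definition tens_act (C : nzRingType) (m n d : nat)
  (rho : 'I_(m + n) -> 'I_(m + n) -> 'M[C]_d) (p q : 'I_(m + n))
  (X : 'M[C]_(m + n, d)) : 'M[C]_(m + n, d) :=
  \matrix_(s, j) ((s == p)%:R * X q j
                  + esign C (epar m n p q) (ipar m n s) * (X *m (rho p q)^T) s j).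

Definition maximal_weight_vec (C : nzRingType) (m n d : nat)
  (rho : 'I_(m + n) -> 'I_(m + n) -> 'M[C]_d) (X : 'M[C]_(m + n, d)) : Prop :=
  X != 0 /\
  (exists lam : 'I_(m + n) -> C, forall p, tens_act C m n d rho p p X = lam p *: X) /\
  (forall p q : 'I_(m + n), (p < q)%N -> tens_act C m n d rho p q X = 0).

Definition formW (C : numClosedFieldType) (d : nat) (G : 'M[C]_d) (v w : 'rV[C]_d) : C :=
  \sum_(i < d) \sum_(j < d) (v 0 i)^* * G i j * w 0 j.

Definition invariant_form (C : numClosedFieldType) (m n d : nat)
  (rho : 'I_(m + n) -> 'I_(m + n) -> 'M[C]_d) (G : 'M[C]_d) : Prop :=
  forall p q v w, formW C d G (act C d (rho p q) v) w = formW C d G v (act C d (rho q p) w).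

(* induced form on V (x) W; the form on V is the standard inner product <s|t> = d_st *)
Definition formVW (C : numClosedFieldType) (m n d : nat) (G : 'M[C]_d)
  (X Y : 'M[C]_(m + n, d)) : C :=
  \sum_(s < m + n) formW C d G (row s X) (row s Y).

(* Write v_+ = sum_s |s> (x) v_s and let w be the highest weight vector of
   V(Lambda). Since w lies in V_0(Lambda), it suffices to find s with
   <v_s, w> <> 0. Suppose there is none. Going down from the last index s, the
   maximality equations for v_+ show that v_s is annihilated by every raising
   operator E_pq (p < q). Such a vector, if orthogonal to w, is orthogonal to
   the whole module: by the commutation relations the span of w under the
   lowering operators is stable under the raising ones, hence a graded
   submodule (w is homogeneous, since its even and odd parts would otherwise be
   two independent highest weight vectors of the same weight), hence all of
   V(Lambda). Non-degeneracy then forces every v_s, and so v_+, to vanish. *)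

From HB Require Import structures.
From mathcomp Require Import all_boot all_order all_algebra.
From mathcomp Require Import ring zify.
Import Order.TTheory GRing.Theory Num.Theory.
Local Open Scope ring_scope.

Set Implicit Arguments.
Unset Strict Implicit.
Unset Printing Implicit Defensive.

Section SesquilinearForm.
Variables (C : numClosedFieldType) (d : nat) (G : 'M[C]_d).

Definition form_col (z : 'rV[C]_d) : 'cV[C]_d := (map_mx Num.conj z *m G)^T.

Lemma formW_col z x : formW C d G z x = (x *m form_col z) 0 0.
Proof.
rewrite /formW /form_col !mxE exchange_big /=; apply: eq_bigr => j _.
rewrite !mxE big_distrr /=; apply: eq_bigr => i _.
by rewrite !mxE mulrC.
Qed.

Lemma formW0l x : formW C d G 0 x = 0.
Proof. by apply: big1 => i _; apply: big1 => j _; rewrite mxE rmorph0 !mul0r. Qed.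

Lemma formW_lincombl a z1 z2 x :
  formW C d G (z1 + a *: z2) x = formW C d G z1 x + a^* * formW C d G z2 x.
Proof.
rewrite /formW big_distrr -big_split; apply: eq_bigr => i _ /=.
rewrite big_distrr -big_split; apply: eq_bigr => j _ /=.
by rewrite !mxE rmorphD rmorphM /=; ring.
Qed.

Lemma sub_kermx_form_col z x :
  (x <= kermx (form_col z))%MS = (formW C d G z x == 0).
Proof.
rewrite sub_kermx formW_col; apply/eqP/eqP => [-> | xz0]; first by rewrite mxE.
by apply/matrixP => i j; rewrite !ord1 xz0 mxE.
Qed.

Lemma form_col_eq0 z : G \in unitmx -> (form_col z == 0) = (z == 0).
Proof.
move=> unitG; rewrite /form_col trmx_eq0; apply/eqP/eqP => [zG0|->]; last first.
  by rewrite (_ : map_mx _ 0 = 0) ?mul0mx //; apply/matrixP => i j; rewrite !mxE rmorph0.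
have zc0 : map_mx Num.conj z = 0 by rewrite -(mulmxK unitG (map_mx _ z)) zG0 mul0mx.
apply/matrixP => i j; apply/eqP; rewrite mxE -conjC_eq0.
by have /matrixP/(_ i j) := zc0; rewrite !mxE => ->.
Qed.

Lemma form_nondegenerate (U : 'M[C]_d) z : G \in unitmx ->
  (1%:M <= U)%MS -> (U <= kermx (form_col z))%MS -> z = 0.
Proof.
move=> unitG fullU /(submx_trans fullU).
by rewrite sub_kermx mul1mx form_col_eq0 // => /eqP.
Qed.

End SesquilinearForm.
Section GradedRepresentation.
Variables (C : fieldType) (m n d : nat) (wpar : 'I_d -> bool)
  (rho : 'I_(m + n) -> 'I_(m + n) -> 'M[C]_d).

Definition actmx (p q : 'I_(m + n)) : 'M[C]_d := (rho p q)^T.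

Local Notation P := (parity_mx C d wpar).
Local Notation sgn p q r s := (esign C (epar m n p q) (epar m n r s)).

Hypothesis rho_homogeneous :
  forall p q i j, rho p q i j != 0 -> (wpar i (+) wpar j) = epar m n p q.
Hypothesis rho_bracket : forall p q r s,
  rho p q *m rho r s - sgn p q r s *: (rho r s *m rho p q) =
  (q == r)%:R *: rho p s - (sgn p q r s * (p == s)%:R) *: rho r q.

Lemma parity_mx_actmx p q :
  P *m actmx p q = esign C true (epar m n p q) *: (actmx p q *m P).
Proof.
rewrite /parity_mx mul_diag_mx mul_mx_diag; apply/matrixP => i j; rewrite !mxE.
have [->|nz] := eqVneq (rho p q j i) 0; first by rewrite !(mulr0, mul0r).
rewrite -(rho_homogeneous nz) /esign.
by case: (wpar i); case: (wpar j) => /=; ring.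
Qed.

Lemma actmx_parity_mx p q :
  actmx p q *m P = esign C true (epar m n p q) *: (P *m actmx p q).
Proof.
rewrite parity_mx_actmx scalerA /esign -exprD -signr_odd.
by case: (epar m n p q); rewrite /= ?expr0 scale1r.
Qed.

Lemma parity_mx_invol : P *m P = 1%:M.
Proof.
rewrite /parity_mx mulmx_diag; apply/matrixP => i j; rewrite !mxE /esign.
by case: (wpar i); rewrite /= ?mulrNN !mulr1.
Qed.

Lemma actmx_bracket p q r s : actmx r s *m actmx p q =
  sgn p q r s *: (actmx p q *m actmx r s) + (q == r)%:R *: actmx p s
  - (sgn p q r s * (p == s)%:R) *: actmx r q.
Proof.
rewrite /actmx -!trmx_mul.
have -> : rho p q *m rho r s = sgn p q r s *: (rho r s *m rho p q) +
    ((q == r)%:R *: rho p s - (sgn p q r s * (p == s)%:R) *: rho r q).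
  by rewrite -rho_bracket addrC subrK.
by rewrite raddfD raddfB /= !linearZ /= addrA trmx_mul.
Qed.

Definition lower_span (T : 'M[C]_d) : 'M[C]_d :=
  (\sum_(pq : 'I_(m + n) * 'I_(m + n) | (pq.2 < pq.1)%N) T *m actmx pq.1 pq.2)%MS.

Fixpoint lower_gen (y : 'rV[C]_d) (k : nat) : 'M[C]_d :=
  if k is k'.+1 then (<<y>> + lower_span (lower_gen y k'))%MS else <<y>>%MS.

Definition raising_stable {k} (U : 'M[C]_(k, d)) :=
  forall p q : 'I_(m + n), (p <= q)%N -> (U *m actmx p q <= U)%MS.

Lemma lower_span_mono A B : (A <= B)%MS -> (lower_span A <= lower_span B)%MS.
Proof. by move=> AB; apply: sumsmxS => pq _; apply: submxMr. Qed.

Lemma sub_lower_span T (p q : 'I_(m + n)) :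
  (q < p)%N -> (T *m actmx p q <= lower_span T)%MS.
Proof. by move=> qp; apply: (sumsmx_sup (p, q)). Qed.

Lemma sub_lower_gen y k : (y <= lower_gen y k)%MS.
Proof.
case: k => [|k] /=; rewrite ?genmxE //.
by apply: submx_trans (addsmxSl _ _); rewrite genmxE.
Qed.

Lemma lower_gen_mono y k : (lower_gen y k <= lower_gen y k.+1)%MS.
Proof.
elim: k => [|k IH] /=; first exact: addsmxSl.
by apply: addsmxS => //; apply: lower_span_mono.
Qed.

Lemma lower_gen_raising_stable y k :
  raising_stable y -> raising_stable (lower_gen y k).
Proof.
move=> ystab; have genstab : raising_stable <<y>>%MS.
  by move=> p q pq; rewrite (eqmxMr _ (genmxE y)) !genmxE ystab.
elim: k => [|k IH] //= p q pq.
rewrite addsmxMr addsmx_sub; apply/andP; split.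
  exact: submx_trans (genstab _ _ pq) (addsmxSl _ _).
have act_next a b : (lower_gen y k *m actmx a b <= lower_gen y k.+1)%MS.
  case: (leqP a b) => [ab|ba].
    exact: submx_trans (IH _ _ ab) (lower_gen_mono y k).
  by apply: submx_trans (addsmxSr _ _); apply: sub_lower_span.
rewrite sumsmxMr; apply/sumsmx_subP => [[r s]] /= sr.
rewrite -mulmxA actmx_bracket mulmxBr mulmxDr -!scalemxAr.
apply: addmx_sub; first apply: addmx_sub.
- apply: scalemx_sub; rewrite mulmxA; apply: submx_trans (addsmxSr _ _).
  exact: submx_trans (submxMr _ (IH _ _ pq)) (sub_lower_span _ sr).
- by apply: scalemx_sub; apply: act_next.
- by rewrite eqmx_opp; apply: scalemx_sub; apply: act_next.
Qed.

Lemma lower_gen_parity_stable y k :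
  (y *m P <= y)%MS -> (lower_gen y k *m P <= lower_gen y k)%MS.
Proof.
move=> yP; have genP : (<<y>>%MS *m P <= <<y>>)%MS.
  by rewrite (eqmxMr _ (genmxE y)) !genmxE.
elim: k => [|k IH] //=.
rewrite addsmxMr addsmx_sub; apply/andP; split.
  exact: submx_trans genP (addsmxSl _ _).
rewrite sumsmxMr; apply/sumsmx_subP => [[r s]] /= sr.
rewrite -mulmxA actmx_parity_mx -scalemxAr; apply: scalemx_sub; rewrite mulmxA.
apply: submx_trans (addsmxSr _ _).
exact: submx_trans (submxMr _ IH) (sub_lower_span _ sr).
Qed.

Lemma submx_chain_stationary {r c} (f : nat -> 'M[C]_(r, c)) :
  (forall k, (f k <= f k.+1)%MS) -> exists k, (f k.+1 <= f k)%MS.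
Proof.
move=> mono.
have rank_grows k : (exists k, (f k.+1 <= f k)%MS) \/ (k <= \rank (f k))%N.
  elim: k => [|k [|IH]]; [by right | by left |].
  have [stat|nstat] := boolP (f k.+1 <= f k)%MS; first by left; exists k.
  by right; apply: leq_ltn_trans IH (rank_ltmx _); rewrite ltmxE mono nstat.
have [//|] := rank_grows c.+1.
by rewrite leqNgt ltnS rank_leq_col.
Qed.

Lemma irreducible_lower_gen_full (y : 'rV[C]_d) :
  irreducible_rep C m n d wpar rho -> y != 0 -> raising_stable y ->
  (y *m P <= y)%MS -> exists T, ((1%:M : 'M[C]_d) <= y + lower_span T)%MS.
Proof.
move=> [_ irr] y0 ystab yP.
have [K statK] := submx_chain_stationary (lower_gen_mono y).
have stableK p q : stablemx (lower_gen y K) (rho p q)^T.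
  case: (leqP p q) => [pq|qp]; first exact: lower_gen_raising_stable.
  by apply: submx_trans statK; apply: submx_trans (addsmxSr _ _); apply: sub_lower_span.
have [/andP[K0 _]|/andP[_ K1]] := irr _ stableK (lower_gen_parity_stable K yP).
  by have := submx_trans (sub_lower_gen y K) K0; rewrite submx0 (negbTE y0).
exists (lower_gen y K); apply: submx_trans K1 (submx_trans (lower_gen_mono y K) _).
by apply: addsmxS => //; rewrite genmxE.
Qed.

Definition raising_ann (x : 'rV[C]_d) :=
  forall p q : 'I_(m + n), (p < q)%N -> x *m actmx p q = 0.

Definition hw_vec (lam : 'I_(m + n) -> C) (x : 'rV[C]_d) :=
  raising_ann x /\ forall p, x *m actmx p p = lam p *: x.

Lemma hw_vec_lincomb lam a x y :
  hw_vec lam x -> hw_vec lam y -> hw_vec lam (x + a *: y).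
Proof.
move=> [xann xwt] [yann ywt]; split => [p q pq|p].
  by rewrite mulmxDl -scalemxAl xann // yann // scaler0 addr0.
by rewrite mulmxDl -scalemxAl xwt ywt scalerDr !scalerA mulrC.
Qed.

Lemma hw_vec_parity lam x : hw_vec lam x -> hw_vec lam (x *m P).
Proof.
move=> [xann xwt]; split => [p q pq|p]; rewrite -mulmxA parity_mx_actmx -scalemxAr mulmxA.
  by rewrite xann // mul0mx scaler0.
by rewrite xwt /epar addbb /esign expr0 scale1r scalemxAl.
Qed.

Lemma hw_vec_raising_stable lam x : hw_vec lam x -> raising_stable x.
Proof.
move=> [xann xwt] p q; rewrite leq_eqVlt => /orP[/eqP/val_inj-> | pq].
  by rewrite xwt scalemx_sub.
by rewrite xann // sub0mx.
Qed.

End GradedRepresentation.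

Section HighestWeightOrthogonality.
Variables (C : numClosedFieldType) (m n d : nat) (wpar : 'I_d -> bool)
  (rho : 'I_(m + n) -> 'I_(m + n) -> 'M[C]_d) (G : 'M[C]_d).

Local Notation P := (parity_mx C d wpar).
Local Notation actmx := (actmx rho).
Local Notation raising_ann := (raising_ann rho).
Local Notation formW := (formW C d G).

Hypothesis rho_homogeneous :
  forall p q i j, rho p q i j != 0 -> (wpar i (+) wpar j) = epar m n p q.
Hypothesis rho_bracket : forall p q r s,
  rho p q *m rho r s - esign C (epar m n p q) (epar m n r s) *: (rho r s *m rho p q) =
  (q == r)%:R *: rho p s
    - (esign C (epar m n p q) (epar m n r s) * (p == s)%:R) *: rho r q.
Hypothesis rho_irr : irreducible_rep C m n d wpar rho.
Hypothesis G_unit : G \in unitmx.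
Hypothesis G_invariant : invariant_form C m n d rho G.

Lemma lower_span_orth z T :
  raising_ann z -> (lower_span rho T <= kermx (form_col G z))%MS.
Proof.
move=> zann; apply/sumsmx_subP => [[r s]] /= sr.
rewrite sub_kermx -mulmxA; apply/eqP.
suff -> : actmx r s *m form_col G z = 0 by rewrite mulmx0.
apply/row_matrixP => i; rewrite row0 rowE mulmxA; apply/eqP.
by rewrite -sub_kermx sub_kermx_form_col -G_invariant [act _ _ _ _]zann ?formW0l.
Qed.

Lemma raising_ann_orth_eq0 y z :
  y != 0 -> raising_stable rho y -> (y *m P <= y)%MS ->
  raising_ann z -> formW z y = 0 -> z = 0.
Proof.
move=> y0 ystab yP zann zy.
have [T full] :=
  irreducible_lower_gen_full rho_homogeneous rho_bracket rho_irr y0 ystab yP.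
apply: (form_nondegenerate G_unit full).
by rewrite addsmx_sub lower_span_orth // sub_kermx_form_col zy eqxx.
Qed.

Lemma hw_vec_homogeneous lam w : hw_vec rho lam w -> (w *m P <= w)%MS.
Proof.
move=> hw; have hwP := hw_vec_parity rho_homogeneous hw.
set b := w + (-1) *: (w *m P).
have [b0|b0] := eqVneq b 0.
  by move/eqP: b0; rewrite /b scaleN1r subr_eq0 => /eqP <-.
set a := w + 1 *: (w *m P).
have [hb ha] := (hw_vec_lincomb (-1) hw hwP, hw_vec_lincomb 1 hw hwP).
have bP : b *m P = - b.
  rewrite mulmxDl -scalemxAl -mulmxA parity_mx_invol mulmx1.
  by rewrite /b !scaleN1r opprB addrC.
have aP : a *m P = a.
  by rewrite mulmxDl -scalemxAl -mulmxA parity_mx_invol mulmx1 /a !scale1r addrC.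
have b_orth z : raising_ann z -> formW z b = 0 -> z = 0.
  apply: raising_ann_orth_eq0 => //; first exact: hw_vec_raising_stable hb.
  by rewrite bP eqmx_opp.
have bb0 : formW b b != 0 by apply: contra b0 => /eqP/(b_orth _ hb.1)/eqP.
(* [a] is a multiple of [b], yet [a] is even and [b] is odd *)
set kap := (formW a b / formW b b)^*.
have akb : a = kap *: b.
  apply/eqP; rewrite -subr_eq0 -scaleNr; apply/eqP/b_orth.
    exact: (hw_vec_lincomb _ ha hb).1.
  by rewrite formW_lincombl rmorphN /= /kap conjCK mulNr divfK // subrr.
have a0 : a = 0.
  have : a = - a by rewrite -{1}aP {1}akb -scalemxAl bP scalerN -akb.
  by move/eqP; rewrite -subr_eq0 opprK -mulr2n -scaler_nat scaler_eq0 pnatr_eq0 => /eqP.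
by move/eqP: a0; rewrite /a scale1r addrC addr_eq0 => /eqP ->; rewrite eqmx_opp.
Qed.

Lemma hw_vec_orth_eq0 lam w z :
  w != 0 -> hw_vec rho lam w -> raising_ann z -> formW z w = 0 -> z = 0.
Proof.
move=> w0 hw; apply: raising_ann_orth_eq0 w0 _ (hw_vec_homogeneous hw).
exact: hw_vec_raising_stable hw.
Qed.

End HighestWeightOrthogonality.

Section TensorWithVectorModule.
Variables (C : numClosedFieldType) (m n d : nat)
  (rho : 'I_(m + n) -> 'I_(m + n) -> 'M[C]_d).

Lemma row_tens_act p q (X : 'M[C]_(m + n, d)) s :
  row s (tens_act C m n d rho p q X) =
  (s == p)%:R *: row q X
  + esign C (epar m n p q) (ipar m n s) *: (row s X *m actmx rho p q).
Proof.
apply/rowP => j; rewrite !mxE; congr (_ + _ * _).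
by apply: eq_bigr => i _; rewrite [row _ _ _ _]mxE.
Qed.

Lemma tens_raising_ann_eq0 (X : 'M[C]_(m + n, d)) :
  (forall p q : 'I_(m + n), (p < q)%N -> tens_act C m n d rho p q X = 0) ->
  (forall s, raising_ann rho (row s X) -> row s X = 0) -> X = 0.
Proof.
move=> Xann rowX0.
(* downward induction on the index [s] of the row *)
have rows_eq0 k (s : 'I_(m + n)) : (m + n - s <= k)%N -> row s X = 0.
  elim: k s => [|k IH] s hs; first by move: hs; rewrite leqn0 subn_eq0 leqNgt ltn_ord.
  apply: rowX0 => p q pq.
  have /eqP := congr1 (row s) (Xann p q pq).
  rewrite row_tens_act row0.
  have -> : (s == p)%:R *: row q X = 0.
    have [sp|] := eqVneq s p; last by rewrite scale0r.
    by rewrite (IH q) ?scaler0 //; move: hs pq; rewrite sp; lia.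
  by rewrite add0r scaler_eq0 signr_eq0 => /eqP.
by apply/row_matrixP => s; rewrite row0 (rows_eq0 (m + n)) ?leq_subr.
Qed.

Lemma formVW_delta (G : 'M[C]_d) (X : 'M[C]_(m + n, d)) s (w : 'rV[C]_d) :
  formVW C m n d G X (delta_mx s 0 *m w) = formW C d G (row s X) w.
Proof.
rewrite /formVW (bigD1 s) //= big1 ?addr0 => [|t ts]; rewrite row_mul.
  congr formW; rewrite -[RHS]mul1mx; congr (_ *m _).
  by apply/matrixP => i j; rewrite !ord1 !mxE !eqxx.
rewrite (_ : row t (delta_mx s 0) = 0) ?mul0mx ?formW_col ?mul0mx ?mxE //.
by apply/matrixP => i j; rewrite !mxE (negbTE ts).
Qed.

End TensorWithVectorModule.

Theorem lemma8 (C : numClosedFieldType) (m n d : nat) (wpar : 'I_d -> bool)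
  (rho : 'I_(m + n) -> 'I_(m + n) -> 'M[C]_d) (G : 'M[C]_d)
  (w0 : 'rV[C]_d) (U0 : 'M[C]_d) (vp : 'M[C]_(m + n, d)) :
  is_glmn_rep C m n d wpar rho ->
  irreducible_rep C m n d wpar rho ->
  G \in unitmx ->
  invariant_form C m n d rho G ->
  highest_weight_vec C m n d rho w0 ->
  L0_generated C m n d rho w0 U0 ->
  vp != 0 ->
  maximal_weight_vec C m n d rho vp ->
  exists X : 'M[C]_(m + n, d), (X <= U0)%MS /\ formVW C m n d G vp X != 0.
Proof.
move=> [rho_hom rho_br] irr G_unit G_inv [w0_nz [[lam w0_wt] w0_ann]] [w0_U0 _]
  vp_nz [_ [_ vp_ann]].
have w0_hw : hw_vec rho lam w0 by [].
have [s vs_w0 | vp_orth] := pickP (fun s => formW C d G (row s vp) w0 != 0).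
  exists (delta_mx s 0 *m w0); rewrite formVW_delta vs_w0.
  by split=> //; apply: submx_trans (submxMl _ _) w0_U0.
case/negP: vp_nz; apply/eqP/(tens_raising_ann_eq0 vp_ann) => s s_ann.
apply: (hw_vec_orth_eq0 rho_hom rho_br irr G_unit G_inv w0_nz w0_hw s_ann).
by apply/eqP; rewrite -[_ == _]negbK vp_orth.
Qed.
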